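(* Let $A$ be a synaptic algebra and let $p,q\in P$ be in generic position ($p\wedge q=p\wedge q^{\perp}=p^{\perp}\wedge q=p^{\perp}\wedge q^{\perp}=0$). Let $c:=(pqp+p^{\perp}q^{\perp}p^{\perp})^{1/2}$, let $u$ and $v$ be the symmetries of the polar decompositions of $p-q^{\perp}$ and $p-q$, respectively, and put $j:=uvp+pvu$ (so that $q=c^2p+csj+s^2p^{\perp}$ with $s:=(pq^{\perp}p+p^{\perp}qp^{\perp})^{1/2}$). Then an element $a\in A$ commutes with both $p$ and $q$ iff there exists $b\in C(c)$ such that $b=bp=pb$ and $a=b+jbj$.
   Context: Synaptic algebra (Foulis): $R$ is a real linear associative algebra with unit $1$, and $A\subseteq R$ is a real linear subspace with $1\in A$. For $a,b\in A$ write $aCb$ iff $ab=ba$; $C(a):=\{b\in A: aCb\}$; $CC(a):=\{b\in A: bCd \text{ for all } d\in C(a)\}$. $A$ is a synaptic algebra with enveloping algebra $R$ iff: (SA1) $A$ is a partially ordered archimedean real linear space with positive cone $A^+$, $1$ is an order unit, $\|\cdot\|$ the order-unit norm; (SA2) $a\in A\Rightarrow a^2\in A^+$; (SA3) $a,b\in A^+\Rightarrow aba\in A^+$; (SA4) if $a\in A$, $b\in A^+$, $aba=0$ then $ab=ba=0$; (SA5) if $a\in A^+$ there is $b\in A^+\cap CC(a)$ with $b^2=a$; (SA6) for $a\in A$ there is $p=p^2\in A$ with $ab=0\Leftrightarrow pb=0$ for all $b\in A$; (SA7) if $1\le a$ there is $b\in A$ with $ab=ba=1$; (SA8) if $a,b\in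 A$, $a_1\le a_2\le\cdots$ are pairwise commuting elements of $C(b)$ with $\|a-a_n\|\to0$, then $a\in C(b)$. $A$ is nondegenerate. Products are computed in $R$. $P:=\{p\in A:p=p^2\}$ with inherited order is an orthomodular lattice with $p^{\perp}:=1-p$, meet $\wedge$, join $\vee$. For $0\le a$, $a^{1/2}$ is its unique positive square root in $A$, $|a|:=(a^2)^{1/2}$; $a^{\circ}$ is the carrier of $a$ (the unique projection with $ab=0\Leftrightarrow a^{\circ}b=0$ for all $b\in A$). A symmetry is $u\in A$ with $u^2=1$. For $a\in A$, the signum $t$ of $a$ is the partial symmetry with $t^2=a^{\circ}$, $t\in CC(a)$, $a=|a|t=t|a|$; the symmetry of the polar decomposition of $a$ is $t+(a^{\circ})^{\perp}$. *)

From HB Require Import structures.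
From mathcomp Require Import all_boot all_order all_algebra.
From mathcomp Require Import boolp classical_sets reals.
Set Implicit Arguments. Unset Strict Implicit. Unset Printing Implicit Defensive.
Import Order.TTheory GRing.Theory Num.Theory.
Local Open Scope ring_scope.
Local Open Scope classical_set_scope.

(* The real numbers are an abstract [realType] K
   (complete archimedean ordered field); the enveloping algebra is a real
   associative unital algebra [E : algType K]; A is a subset of E (a predicate)
   and [pos] is the positive cone A^+ (a subset of A). *)

Section Synaptic.
Variables (K : realType) (E : algType K).
Variables (A pos : E -> Prop).

Definition sle (a b : E) : Prop := pos (b - a).

Definition Ccom (a : E) (b : E) : Prop := A b /\ a * b = b * a.
Definition CCcom (a : E) (b : E) : Prop :=
  A b /\ forall d, Ccom a d -> b * d = d * b.

Definition onorm (a : E) : K :=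
  inf [set l : K | 0 < l /\ sle (- (l *: 1)) a /\ sle a (l *: 1)].

Record synaptic : Prop := Synaptic {
  sa_0 : A 0;
  sa_add : forall a b, A a -> A b -> A (a + b);
  sa_scale : forall (r : K) a, A a -> A (r *: a);
  sa_1 : A 1;
  sa_pos_sub : forall a, pos a -> A a;
  sa_pos_add : forall a b, pos a -> pos b -> pos (a + b);
  sa_pos_scale : forall (r : K) a, 0 <= r -> pos a -> pos (r *: a);
  sa_pos_antisym : forall a, pos a -> pos (- a) -> a = 0;
  sa_archimedean : forall a b, A a -> A b ->
      (forall n : nat, sle (n%:R *: a) b) -> sle a 0;
  sa_order_unit : forall a, A a ->
      exists l : K, 0 < l /\ sle (- (l *: 1)) a /\ sle a (l *: 1);
  sa2 : forall a, A a -> pos (a * a);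
  sa3 : forall a b, pos a -> pos b -> pos (a * b * a);
  sa4 : forall a b, A a -> pos b -> a * b * a = 0 ->
      a * b = 0 /\ b * a = 0;
  sa5 : forall a, pos a -> exists b, pos b /\ CCcom a b /\ b * b = a;
  sa6 : forall a, A a -> exists p, A p /\ p = p * p /\
      (forall b, A b -> (a * b = 0 <-> p * b = 0));
  sa7 : forall a, A a -> sle 1 a -> exists b, A b /\ a * b = 1 /\ b * a = 1;
  sa8 : forall (a b : E) (s : nat -> E), A a -> A b ->
      (forall n, Ccom b (s n)) ->
      (forall n, sle (s n) (s n.+1)) ->
      (forall m n, s m * s n = s n * s m) ->
      (forall e : K, 0 < e -> exists N, forall n, (N <= n)%N -> onorm (a - s n) < e) ->
      Ccom b a;
  sa_nondeg : (1 : E) <> 0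
}.

Definition proj (p : E) : Prop := A p /\ p = p * p.

Definition proj_meet (p q m : E) : Prop :=
  proj m /\ sle m p /\ sle m q /\
  forall r, proj r -> sle r p -> sle r q -> sle r m.

Definition is_sqrt (a b : E) : Prop := pos b /\ b * b = a.

Definition is_abs (a x : E) : Prop := is_sqrt (a * a) x.

Definition is_carrier (a e : E) : Prop :=
  proj e /\ forall b, A b -> (a * b = 0 <-> e * b = 0).

Definition is_signum (a t : E) : Prop :=
  A t /\ exists e x, is_carrier a e /\ t * t = e /\ CCcom a t /\
    is_abs a x /\ a = x * t /\ a = t * x.

Definition is_polar_symmetry (a u : E) : Prop :=
  exists t e, is_signum a t /\ is_carrier a e /\ u = t + (1 - e).

End Synaptic.

From mathcomp Require Import all_boot all_order all_algebra.
From mathcomp Require Import boolp classical_sets reals.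
Import Order.TTheory GRing.Theory Num.Theory.
Local Open Scope ring_scope.
Set Implicit Arguments. Unset Strict Implicit.

(* Put e := p - q^perp and d := p - q.  In any ring, e^2 = pqp + p^perp q^perp
   p^perp, e^2 + d^2 = 1 and ed = -de.  Generic position says that e and d have
   carrier 1, so they can be cancelled; hence e = cu = uc and d = sv = vs with
   s := |d|, u and v symmetries, and cancelling c and s yields uv = -vu,
   upu = q and vpv = q^perp.  Then j = uv(p - p^perp) is a symmetry with
   jpj = p^perp and q = c^2 p + csj + s^2 p^perp.  If a commutes with p and q,
   it commutes with e and d, hence with c, u, v and j, and b := ap works since
   ap^perp = j(ap)j.  Conversely b + jbj commutes with p and j, and with c and
   s, hence with q. *)

(* [abel] decides equalities between Z-linear combinations of arbitrary terms
   of an abelian group; after [expand], these terms are the noncommutative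
   monomials of a ring, where [ring] does not apply. *)
Inductive zexpr := ZAtom of nat | ZZero | ZAdd of zexpr & zexpr | ZOpp of zexpr.

Section AbelianReflection.
Variable V : zmodType.

Fixpoint zeval (env : seq V) (t : zexpr) : V :=
  match t with
  | ZAtom n => nth 0 env n
  | ZZero => 0
  | ZAdd a b => zeval env a + zeval env b
  | ZOpp a => - zeval env a
  end.

Fixpoint zcoef (t : zexpr) (n : nat) : int :=
  match t with
  | ZAtom m => (m == n)%:Z
  | ZZero => 0
  | ZAdd a b => zcoef a n + zcoef b n
  | ZOpp a => - zcoef a n
  end.

Fixpoint zbound (t : zexpr) : nat :=
  match t with
  | ZAtom n => n.+1
  | ZZero => 0
  | ZAdd a b => maxn (zbound a) (zbound b)
  | ZOpp a => zbound a
  end.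

Lemma zeval_sum env t N : (zbound t <= N)%N ->
  zeval env t = \sum_(i < N) nth 0 env i *~ zcoef t i.
Proof.
elim: t => [n||a iha b ihb|a iha] /= hN.
- rewrite (bigD1 (Ordinal hN)) //= eqxx big1 ?addr0 // => i /negbTE.
  by rewrite -val_eqE eq_sym => ->.
- by rewrite big1 // => i _; rewrite mulr0z.
- rewrite geq_max in hN; case/andP: hN => ha hb.
  by rewrite iha // ihb // -big_split; apply: eq_bigr => i _; rewrite mulrzDr.
- by rewrite iha // -sumrN; apply: eq_bigr => i _; rewrite mulrNz.
Qed.

Definition zcoef_eq (a b : zexpr) : bool :=
  all (fun i => zcoef a i == zcoef b i) (iota 0 (maxn (zbound a) (zbound b))).

Lemma zcoef_eq_sound env a b : zcoef_eq a b -> zeval env a = zeval env b.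
Proof.
move=> /allP h; set N := maxn (zbound a) (zbound b).
rewrite (@zeval_sum env a N) ?leq_maxl // (@zeval_sum env b N) ?leq_maxr //.
by apply: eq_bigr => i _; rewrite (eqP (h i _)) // mem_iota ltn_ord.
Qed.

End AbelianReflection.

Ltac zmem x l := match l with
  | nil => constr:(false)
  | ?y :: ?l' => match constr:(tt) with
     | _ => let _ := type_term (@erefl _ x : x = y) in constr:(true)
     | _ => zmem x l' end
  end.
Ltac zatoms t l := match t with
  | ?a + ?b => let l1 := zatoms a l in zatoms b l1
  | - ?a => zatoms a l
  | 0 => l
  | _ => let b := zmem t l in
         match b with true => l | false => constr:(t :: l) end
  end.
Ltac zindex x l := match l with
  | ?y :: ?l' => match constr:(tt) with
     | _ => let _ := type_term (@erefl _ x : x = y) in constr:(0%N)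
     | _ => let n := zindex x l' in constr:(n.+1) end
  end.
Ltac zreify t l := match t with
  | ?a + ?b => let ra := zreify a l in let rb := zreify b l in constr:(ZAdd ra rb)
  | - ?a => let ra := zreify a l in constr:(ZOpp ra)
  | 0 => constr:(ZZero)
  | _ => let n := zindex t l in constr:(ZAtom n)
  end.
Ltac abel := match goal with
  | |- @eq ?T ?L ?R =>
    let l := zatoms L (@nil T) in let l := zatoms R l in
    let rl := zreify L l in let rr := zreify R l in
    exact (@zcoef_eq_sound _ l rl rr (erefl true))
  end.

Ltac expand := repeat progress rewrite ?mulrDl ?mulrDr ?mulNr ?mulrN ?opprK
  ?opprD ?mulr1 ?mul1r ?mulr0 ?mul0r ?mulrA ?addr0 ?add0r ?oppr0.

Section Idempotents.
Variables (R : pzRingType) (p q : R).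
Hypotheses (pp : p * p = p) (qq : q * q = q).
Let ppx x : x * p * p = x * p. Proof. by rewrite -mulrA pp. Qed.
Let qqx x : x * q * q = x * q. Proof. by rewrite -mulrA qq. Qed.
Ltac normalize := expand; repeat progress rewrite ?ppx ?qqx ?pp ?qq.

Local Notation e := (p - (1 - q)).
Local Notation d := (p - q).

Lemma mule_p : e * p = q * e. Proof. by normalize; abel. Qed.
Lemma muld_p : d * p = (1 - q) * d. Proof. by normalize; abel. Qed.
Lemma muld_q : d * q = (1 - p) * d. Proof. by normalize; abel. Qed.
Lemma sqr_e : e * e = p * q * p + (1 - p) * (1 - q) * (1 - p).
Proof. by normalize; abel. Qed.
Lemma sqr_d : d * d = 1 - e * e. Proof. by normalize; abel. Qed.
Lemma anticomm_e_d : e * d + d * e = 0. Proof. by normalize; abel. Qed.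
Lemma idem_decomp : q = e * e * p + e * d * (p - (1 - p)) + d * d * (1 - p).
Proof. by normalize; abel. Qed.
Lemma comm_sqr_e_p : GRing.comm (e * e) p.
Proof. by rewrite /GRing.comm; normalize; abel. Qed.
Lemma comm_sqr_e_q : GRing.comm (e * e) q.
Proof. by rewrite /GRing.comm; normalize; abel. Qed.

End Idempotents.

Lemma exchange_symmetry (R : pzRingType) (w p : R) : p * p = p -> w * w = -1 ->
  w * p = (1 - p) * w ->
  let j := w * (p - (1 - p)) in j * j = 1 /\ j * p = (1 - p) * j.
Proof.
move=> pp ww wp j.
have ppx x : x * p * p = x * p by rewrite -mulrA pp.
have wwx x : x * w * w = - x by rewrite -mulrA ww mulrN mulr1.
have wp' : w * p = w - p * w by rewrite wp mulrBl mul1r.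
have wpx x : x * w * p = x * w - x * p * w by rewrite -mulrA wp' mulrBr mulrA.
by rewrite /j; split; expand;
  do 6! (rewrite ?wpx ?wwx ?ppx ?wp' ?ww ?pp; expand); abel.
Qed.

Section Exchange.
Variables (R : pzRingType) (p j : R).
Hypotheses (jj : j * j = 1) (jp : j * p = (1 - p) * j).

Lemma conj_exchange : j * p * j = 1 - p.
Proof. by rewrite jp -mulrA jj mulr1. Qed.

Lemma comm_exchange_sum b : GRing.comm j (b + j * b * j).
Proof.
by rewrite /GRing.comm mulrDl mulrDr !mulrA jj mul1r -mulrA jj mulr1 addrC.
Qed.

Lemma comm_p_exchange_sum b : p * b = b -> b * p = b ->
  GRing.comm p (b + j * b * j).
Proof.
move=> pb bp; have p1b : (1 - p) * b = 0 by rewrite mulrBl mul1r pb subrr.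
have b1p : b * (1 - p) = 0 by rewrite mulrBr mulr1 bp subrr.
have pj : p * j = j * (1 - p) by rewrite -conj_exchange !mulrA jj mul1r.
rewrite /GRing.comm mulrDl mulrDr pb bp !mulrA pj -(mulrA j (1 - p)) p1b.
by rewrite -(mulrA _ j p) jp mulrA -(mulrA j b) b1p !(mulr0, mul0r).
Qed.

End Exchange.

Section SynapticAlgebra.
Variables (K : realType) (E : algType K) (A pos : E -> Prop).
Hypothesis HA : synaptic A pos.

Lemma A_1 : A 1. Proof. exact: (sa_1 HA). Qed.
Lemma A_add x y : A x -> A y -> A (x + y). Proof. exact: (sa_add HA). Qed.
Lemma A_of_pos x : pos x -> A x. Proof. exact: (sa_pos_sub HA). Qed.

Lemma A_opp x : A x -> A (- x).
Proof. by rewrite -scaleN1r; apply: (sa_scale HA). Qed.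

Lemma A_sub x y : A x -> A y -> A (x - y).
Proof. by move=> Ax Ay; apply/A_add/A_opp. Qed.

Lemma A_sqr x : A x -> A (x * x).
Proof. by move/(sa2 HA)/A_of_pos. Qed.

Lemma pos_1 : pos 1.
Proof. by have := sa2 HA A_1; rewrite mulr1. Qed.

Lemma sqr_eq0 x : A x -> x * x = 0 -> x = 0.
Proof. by move=> Ax x2; have [] := sa4 HA Ax pos_1; rewrite ?mulr1. Qed.

Lemma A_jordan x y : A x -> A y -> A (x * y + y * x).
Proof.
move=> Ax Ay.
have -> : x * y + y * x = (x + y) * (x + y) - x * x - y * y by expand; abel.
by apply/A_sub/A_sqr/Ay; apply/A_sub/A_sqr/Ax/A_sqr/A_add.
Qed.

Lemma A_half x : A (x + x) -> A x.
Proof.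
move=> Axx; have -> : x = (2%:R^-1 : K) *: (x + x).
  by rewrite -mulr2n -scaler_nat scalerA mulVf ?scale1r // pnatr_eq0.
exact: (sa_scale HA).
Qed.

Lemma A_mulC x y : A x -> A y -> GRing.comm x y -> A (x * y).
Proof. by move=> Ax Ay xy; apply: A_half; rewrite {2}xy; apply: A_jordan. Qed.

Lemma A_conj x y : A x -> A y -> A (x * y * x).
Proof.
move=> Ax Ay; apply: A_half.
have -> : x * y * x + x * y * x =
    (x * y + y * x) * x + x * (x * y + y * x) - (x * x * y + y * (x * x)).
  by expand; abel.
by apply: A_sub; apply: A_jordan => //; [apply: A_jordan | apply: A_sqr].
Qed.

Lemma mul_eq0C x y : A x -> A y -> x * y = 0 -> y * x = 0.
Proof.
move=> Ax Ay xy0; have := A_jordan Ax Ay; rewrite xy0 add0r => Ayx.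
by apply: sqr_eq0 => //; rewrite mulrA -(mulrA y) xy0 mulr0 mul0r.
Qed.

Lemma pos_mulC x y : pos x -> pos y -> GRing.comm x y -> pos (x * y).
Proof.
move=> px py xy; have [r [pr [[Ar CCr] rr]]] := sa5 HA px.
have ry : GRing.comm r y by apply: CCr; split => //; apply: A_of_pos.
by rewrite -rr -mulrA ry mulrA; apply: (sa3 HA).
Qed.

(* [b] and [c] commute, so [(b + c) (b - c) = 0]; thus [b (b - c)^2] and
   [c (b - c)^2] are positive with sum 0, whence [(b - c)^3 = 0]. *)
Lemma pos_sqrt_eq b c : pos b -> (forall x, Ccom A (b * b) x -> GRing.comm b x) ->
  pos c -> c * c = b * b -> c = b.
Proof.
move=> pb CCb pc cb; have [Ab Ac] := (A_of_pos pb, A_of_pos pc).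
have bc : GRing.comm b c by apply: CCb; split => //; rewrite -cb mulrA.
set z := b - c; have Az : A z by apply: A_sub.
have [bz cz] : GRing.comm b z /\ GRing.comm c z.
  by split; apply: commrB => //; apply: commr_sym.
have pz2 : pos (z * z) by apply: (sa2 HA).
have pbz := pos_mulC pb pz2 (commrM bz bz).
have pcz := pos_mulC pc pz2 (commrM cz cz).
have sum0 : b * (z * z) + c * (z * z) = 0.
  rewrite -mulrDl mulrA.
  suff -> : (b + c) * z = 0 by rewrite mul0r.
  by rewrite /z; expand; rewrite bc cb; abel.
have bz0 : b * (z * z) = 0.
  apply: (sa_pos_antisym HA) => //.
  suff -> : - (b * (z * z)) = c * (z * z) by [].
  by apply: (addrI (b * (z * z))); rewrite subrr sum0.
have cz0 : c * (z * z) = 0 by move: sum0; rewrite bz0 add0r.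
have z3 : z * (z * z) = 0 by rewrite {1}/z mulrBl bz0 cz0 subrr.
have z2 : z * z = 0 by apply: sqr_eq0; [apply: A_sqr | rewrite -mulrA z3 mulr0].
by apply/eqP; rewrite eq_sym -subr_eq0; apply/eqP/sqr_eq0.
Qed.

Lemma pos_sqrt_comm c x : pos c -> A x -> GRing.comm (c * c) x -> GRing.comm c x.
Proof.
move=> pc Ax c2x; have [b [pb [[_ CCb] bb]]] := sa5 HA (sa2 HA (A_of_pos pc)).
have CCb' y : Ccom A (b * b) y -> GRing.comm b y by rewrite bb; apply: CCb.
by rewrite (pos_sqrt_eq pb CCb' pc) //; apply: CCb'; rewrite bb.
Qed.

Lemma pos_sqrt_inj b c : pos b -> pos c -> b * b = c * c -> b = c.
Proof.
move=> pb pc bc; have [r [pr [[_ CCr] rr]]] := sa5 HA (sa2 HA (A_of_pos pb)).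
have CCr' x : Ccom A (r * r) x -> GRing.comm r x by rewrite rr; apply: CCr.
have -> : b = r by apply: (pos_sqrt_eq pr CCr' pb); rewrite rr.
by apply/esym/(pos_sqrt_eq pr CCr' pc); rewrite rr bc.
Qed.

Lemma pos_proj x : proj A x -> pos x.
Proof. by case=> Ax ->; apply: (sa2 HA). Qed.

Lemma proj_compl x : proj A x -> proj A (1 - x).
Proof.
case=> Ax xx; split; first by apply: A_sub A_1 Ax.
by expand; rewrite -xx; abel.
Qed.

Lemma proj_mulC x y : proj A x -> proj A y -> GRing.comm x y -> proj A (x * y).
Proof.
case=> Ax xx [Ay yy] xy; split; first exact: A_mulC.
by rewrite mulrA -(mulrA x) -xy mulrA -xx -mulrA -yy.
Qed.

Lemma proj_le_pos P g : proj A P -> proj A g -> P * g = g -> pos (P - g).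
Proof.
move=> hP hg Pg; have [[AP _] [Ag _]] := (hP, hg).
have gP : g * P = g.
  have : g * (1 - P) = 0.
    apply: mul_eq0C => //; first exact: A_sub A_1 AP.
    by rewrite mulrBl mul1r Pg subrr.
  by rewrite mulrBr mulr1 => /eqP; rewrite subr_eq0 eq_sym => /eqP.
have -> : P - g = P * (1 - g) by rewrite mulrBr mulr1 Pg.
apply/pos_proj/proj_mulC => //; first exact: proj_compl.
by apply: commrB; [exact: commr1 | rewrite /GRing.comm Pg gP].
Qed.

Lemma meet0_proj P Q g : proj_meet A pos P Q 0 -> proj A P -> proj A Q ->
  proj A g -> P * g = g -> Q * g = g -> g = 0.
Proof.
move=> [_ [_ [_ glb]]] hP hQ hg Pg Qg.
have := glb g hg (proj_le_pos hP hg Pg) (proj_le_pos hQ hg Qg).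
rewrite /sle add0r => png.
by apply: (sa_pos_antisym HA) => //; apply: pos_proj.
Qed.

Lemma carrier_compl a f : A a -> is_carrier A a f ->
  [/\ proj A (1 - f), a * (1 - f) = 0 &
      forall y, A y -> a * y = 0 -> (1 - f) * y = y /\ y * (1 - f) = y].
Proof.
move=> Aa [[Af ff] af]; split; first exact: proj_compl.
  by apply/af; [apply: A_sub A_1 Af | rewrite mulrBr mulr1 -ff subrr].
move=> y Ay ay; have fy : f * y = 0 by apply/af.
have yf : y * f = 0 by apply: mul_eq0C.
by rewrite mulrBl mulrBr mul1r mulr1 fy yf !subr0.
Qed.

(* [a] sends [P * k + k * P] to 0, so [k] fixes it on both sides; comparing
   the two sides gives [k P = k P k = P k]. *)
Lemma carrier_compl_comm a f P Q : A a -> is_carrier A a f -> A P ->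
  a * P = Q * a -> GRing.comm (1 - f) P.
Proof.
move=> Aa af AP aP; have [[Ak kk] ak fix_k] := carrier_compl Aa af.
move: (1 - f) Ak kk ak fix_k => k Ak kk ak fix_k.
have [h1 h2] : k * (P * k + k * P) = P * k + k * P /\
               (P * k + k * P) * k = P * k + k * P.
  apply: fix_k; first by apply: A_jordan.
  by rewrite mulrDr !mulrA aP -mulrA ak mulr0 mul0r addr0.
have kkx x : x * k * k = x * k by rewrite -mulrA -kk.
move: h1 h2; expand; rewrite -kk !kkx => h1 h2.
have e1 : k * P * k = P * k by apply: (addIr (k * P)).
have e2 : k * P * k = k * P by apply: (addrI (P * k)).
by rewrite /GRing.comm -e2 e1.
Qed.

Lemma carrier1_cancel x y : A x -> (forall f, is_carrier A x f -> f = 1) ->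
  A y -> x * y = 0 -> y = 0.
Proof.
move=> Ax x1 Ay xy; have [f [Af [ff xf]]] := sa6 HA Ax.
have <- : f * y = y by rewrite (x1 f) ?mul1r //; split.
exact/xf.
Qed.

Lemma polar_symmetry_carrier1 x u r :
  (forall f, is_carrier A x f -> f = 1) -> is_polar_symmetry A pos x u ->
  pos r -> r * r = x * x ->
  [/\ A u, u * u = 1, forall y, A y -> GRing.comm x y -> GRing.comm u y,
      x = r * u & x = u * r].
Proof.
move=> x1 [t [f [[At [f' [y [xf' [tt' [[_ CCt] [[py yy] [xyt xty]]]]]]]]
  [xf ->]]]].
move=> pr rr; rewrite (x1 f xf) subrr addr0.
have yr : y = r by apply: pos_sqrt_inj; rewrite // yy rr.
rewrite -yr; split => //; first by rewrite tt'; apply: x1.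
by move=> z Az xz; apply: CCt.
Qed.

End SynapticAlgebra.

Section GenericPosition.
Variables (K : realType) (E : algType K) (A pos : E -> Prop).
Hypothesis HA : synaptic A pos.
Variables p q : E.
Hypotheses (Hp : proj A p) (Hq : proj A q).

Local Notation e := (p - (1 - q)).
Local Notation d := (p - q).

Let Ap : A p. Proof. by case: Hp. Qed.
Let Aq : A q. Proof. by case: Hq. Qed.
Let pp : p * p = p. Proof. by case: Hp. Qed.
Let qq : q * q = q. Proof. by case: Hq. Qed.

Lemma A_e : A e. Proof. exact: (A_sub HA Ap (A_sub HA (A_1 HA) Aq)). Qed.
Lemma A_d : A d. Proof. exact: (A_sub HA Ap Aq). Qed.

Lemma carrier_e_eq1 f : proj_meet A pos p (1 - q) 0 ->
  proj_meet A pos (1 - p) q 0 -> is_carrier A e f -> f = 1.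
Proof.
move=> g2 g3 ef; have [hk ek _] := carrier_compl HA A_e ef.
have kp := carrier_compl_comm HA A_e ef Ap (mule_p pp qq).
apply/esym/eqP; rewrite -subr_eq0; apply/eqP.
move: (1 - f) hk ek kp => k hk ek kp.
have qk : q * k = k - p * k.
  by apply/eqP; rewrite -subr_eq0 -ek; apply/eqP; expand; abel.
have pk0 : p * k = 0.
  have hpk := proj_mulC HA Hp hk (commr_sym kp).
  apply: (meet0_proj HA g2 Hp (proj_compl HA Hq) hpk); first by rewrite mulrA pp.
  have qpk : q * (p * k) = 0.
    by rewrite -kp mulrA qk mulrBl -mulrA kp mulrA pp subrr.
  by rewrite mulrBl mul1r qpk subr0.
apply: (meet0_proj HA g3 (proj_compl HA Hp) Hq hk); last by rewrite qk pk0 subr0.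
by rewrite mulrBl mul1r pk0 subr0.
Qed.

Lemma carrier_d_eq1 f : proj_meet A pos p q 0 ->
  proj_meet A pos (1 - p) (1 - q) 0 -> is_carrier A d f -> f = 1.
Proof.
move=> g1 g4 df; have [hk dk _] := carrier_compl HA A_d df.
have kp := carrier_compl_comm HA A_d df Ap (muld_p pp qq).
have kq := carrier_compl_comm HA A_d df Aq (muld_q pp qq).
apply/esym/eqP; rewrite -subr_eq0; apply/eqP.
move: (1 - f) hk dk kp kq => k hk dk kp kq.
have qk : q * k = p * k by apply/esym/eqP; rewrite -subr_eq0 -mulrBl dk.
have pk0 : p * k = 0.
  have hpk := proj_mulC HA Hp hk (commr_sym kp).
  apply: (meet0_proj HA g1 Hp Hq hpk); first by rewrite mulrA pp.
  by rewrite -kp mulrA qk -mulrA kp mulrA pp.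
apply: (meet0_proj HA g4 (proj_compl HA Hp) (proj_compl HA Hq) hk).
  by rewrite mulrBl mul1r pk0 subr0.
by rewrite mulrBl mul1r qk pk0 subr0.
Qed.

Lemma comm_sqr_e_e : GRing.comm (e * e) e.
Proof. by rewrite /GRing.comm mulrA. Qed.

Lemma comm_sqr_e_d : GRing.comm (e * e) d.
Proof. exact: commrB (comm_sqr_e_p pp qq) (comm_sqr_e_q pp qq). Qed.

Hypotheses (g1 : proj_meet A pos p q 0) (g2 : proj_meet A pos p (1 - q) 0)
  (g3 : proj_meet A pos (1 - p) q 0) (g4 : proj_meet A pos (1 - p) (1 - q) 0).
Variables c s u v : E.
Hypotheses (Hc : is_sqrt pos (p * q * p + (1 - p) * (1 - q) * (1 - p)) c)
  (Hs : is_sqrt pos (d * d) s)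
  (Hu : is_polar_symmetry A pos e u) (Hv : is_polar_symmetry A pos d v).

Local Notation j := (u * v * p + p * v * u).

Let pc : pos c. Proof. by case: Hc. Qed.
Let ps : pos s. Proof. by case: Hs. Qed.
Let Ac : A c. Proof. exact: (A_of_pos HA pc). Qed.
Let As : A s. Proof. exact: (A_of_pos HA ps). Qed.

Lemma sqr_c : c * c = e * e. Proof. by case: Hc => _ ->; rewrite sqr_e. Qed.

Lemma comm_c x : A x -> GRing.comm (e * e) x -> GRing.comm c x.
Proof. by move=> Ax ex; apply: (pos_sqrt_comm HA pc Ax); rewrite sqr_c. Qed.

Lemma comm_s x : A x -> GRing.comm (e * e) x -> GRing.comm s x.
Proof.
move=> Ax ex; apply: (pos_sqrt_comm HA ps Ax).
case: Hs => _ ->; rewrite sqr_d //.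
by apply/commr_sym/commrB; [exact: commr1 | exact: commr_sym].
Qed.

Lemma polar_e : [/\ A u, u * u = 1,
  forall y, A y -> GRing.comm e y -> GRing.comm u y, e = c * u & e = u * c].
Proof.
exact: (polar_symmetry_carrier1 HA (fun f => carrier_e_eq1 g2 g3) Hu pc sqr_c).
Qed.

Lemma polar_d : [/\ A v, v * v = 1,
  forall y, A y -> GRing.comm d y -> GRing.comm v y, d = s * v & d = v * s].
Proof.
apply: (polar_symmetry_carrier1 HA (fun f => carrier_d_eq1 g1 g4) Hv ps).
by case: Hs.
Qed.

Lemma cancel_c y : A y -> c * y = 0 -> y = 0.
Proof.
have [_ _ _ _ euc] := polar_e.
move=> Ay cy; apply: (carrier1_cancel HA A_e (fun f => carrier_e_eq1 g2 g3) Ay).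
by rewrite euc -mulrA cy mulr0.
Qed.

Lemma cancel_s y : A y -> s * y = 0 -> y = 0.
Proof.
have [_ _ _ _ dvs] := polar_d.
move=> Ay sy; apply: (carrier1_cancel HA A_d (fun f => carrier_d_eq1 g1 g4) Ay).
by rewrite dvs -mulrA sy mulr0.
Qed.

Lemma comm_c_s : GRing.comm c s.
Proof.
by apply/commr_sym/comm_s => //; rewrite -sqr_c /GRing.comm mulrA.
Qed.

Lemma comm_uv_cs :
  [/\ GRing.comm u c, GRing.comm u s, GRing.comm v c & GRing.comm v s].
Proof.
have [_ _ u_e _ _] := polar_e; have [_ _ v_d _ _] := polar_d.
have ec := commr_sym (comm_c A_e comm_sqr_e_e).
have es := commr_sym (comm_s A_e comm_sqr_e_e).
have dc := commr_sym (comm_c A_d comm_sqr_e_d).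
have ds := commr_sym (comm_s A_d comm_sqr_e_d).
by split; [apply: (u_e c) | apply: (u_e s) | apply: (v_d c) | apply: (v_d s)].
Qed.

Lemma mul_e_d : e * d = c * s * (u * v).
Proof.
have [_ _ _ euc _] := polar_e; have [_ _ _ dsv _] := polar_d.
have [_ us _ _] := comm_uv_cs.
by rewrite {1}euc dsv !mulrA -(mulrA c u s) us !mulrA.
Qed.

Lemma anticomm_u_v : v * u = - (u * v).
Proof.
have [Au _ _ euc _] := polar_e; have [Av _ _ dsv _] := polar_d.
have [_ us vc vs] := comm_uv_cs.
set z := u * v + v * u.
have Az : A z by apply: (A_jordan HA).
have sz : GRing.comm s z.
  by apply: commrD; apply: commrM; apply: commr_sym.
have de : d * e = c * s * (v * u).
  by rewrite dsv euc !mulrA -(mulrA s v c) vc !mulrA -comm_c_s.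
have csz : c * (s * z) = 0 by rewrite mulrA mulrDr -mul_e_d -de anticomm_e_d.
have sz0 : s * z = 0 by apply: cancel_c csz; apply: (A_mulC HA).
by apply/eqP; rewrite -addr_eq0 addrC; apply/eqP/cancel_s.
Qed.

Lemma conj_u_p : u * p * u = q.
Proof.
have [Au uu _ euc _] := polar_e.
have cq : GRing.comm c q := comm_c Aq (comm_sqr_e_q pp qq).
apply/eqP; rewrite -subr_eq0; apply/eqP/cancel_c.
  by apply: (A_sub HA) => //; apply: (A_conj HA).
rewrite mulrBr !mulrA -euc (mule_p pp qq) euc !mulrA -(mulrA _ u u) uu mulr1.
by rewrite cq subrr.
Qed.

Lemma mulu_q : u * q = p * u.
Proof. by have [_ uu _ _ _] := polar_e; rewrite -conj_u_p !mulrA uu mul1r. Qed.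

Lemma mulv_p : v * p = (1 - q) * v.
Proof.
have [Av vv _ dsv _] := polar_d.
have s1q : GRing.comm s (1 - q).
  exact: commrB (commr1 s) (comm_s Aq (comm_sqr_e_q pp qq)).
suff vpv : v * p * v = 1 - q by rewrite -vpv -(mulrA _ v v) vv mulr1.
apply/eqP; rewrite -subr_eq0; apply/eqP/cancel_s.
  by apply: (A_sub HA); [apply: (A_conj HA) | apply: (A_sub HA (A_1 HA))].
rewrite mulrBr !mulrA -dsv (muld_p pp qq) dsv !mulrA -(mulrA _ v v) vv mulr1.
by rewrite s1q subrr.
Qed.

Lemma mul_uv_p : u * v * p = (1 - p) * (u * v).
Proof.
have u1q : u * (1 - q) = (1 - p) * u by rewrite mulrBr mulrBl mulr1 mul1r mulu_q.
by rewrite -mulrA mulv_p mulrA u1q -mulrA.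
Qed.

Lemma j_eq : j = u * v * (p - (1 - p)).
Proof.
have pw : p * (u * v) = u * v * (1 - p).
  by rewrite mulrBr mulr1 mul_uv_p mulrBl mul1r opprB addrC subrK.
by rewrite -(mulrA p v u) anticomm_u_v mulrN pw [RHS]mulrBr.
Qed.

Lemma exchange_j : j * j = 1 /\ j * p = (1 - p) * j.
Proof.
have [_ uu _ _ _] := polar_e; have [_ vv _ _ _] := polar_d.
have ww : u * v * (u * v) = -1.
  by rewrite mulrA -(mulrA u v u) anticomm_u_v mulrN mulNr mulrA uu mul1r vv.
by rewrite j_eq; apply: exchange_symmetry => //; apply: mul_uv_p.
Qed.

Lemma comm_j x : GRing.comm x u -> GRing.comm x v -> GRing.comm x p ->
  GRing.comm x j.
Proof.
by move=> xu xv xp; apply: commrD; apply: commrM => //; apply: commrM.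
Qed.

Lemma q_decomp : q = c * c * p + c * s * j + s * s * (1 - p).
Proof.
rewrite {1}(idem_decomp pp qq) -sqr_c mul_e_d j_eq !mulrA.
by case: Hs => _ ->.
Qed.

Lemma commute_pq_decomp a : A a -> GRing.comm a p -> GRing.comm a q ->
  exists b, Ccom A c b /\ b = b * p /\ b = p * b /\ a = b + j * b * j.
Proof.
move=> Aa ap aq; have [_ _ u_e _ _] := polar_e; have [_ _ v_d _ _] := polar_d.
have [jj jp] := exchange_j.
have ae : GRing.comm a e := commrB ap (commrB (commr1 a) aq).
have ad : GRing.comm a d := commrB ap aq.
have ca : GRing.comm c a := comm_c Aa (commr_sym (commrM ae ae)).
have ja : GRing.comm a j.
  by apply: comm_j => //; apply/commr_sym; [apply: (u_e a) | apply: (v_d a)].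
have cp : GRing.comm c p := comm_c Ap (comm_sqr_e_p pp qq).
exists (a * p); split; first by split; [apply: (A_mulC HA) | apply: commrM].
split; first by rewrite -mulrA pp.
split; first by rewrite mulrA -ap -mulrA pp.
rewrite [j * (a * p)]mulrA -ja -(mulrA a j p) -(mulrA a) (conj_exchange jj jp).
by rewrite mulrBr mulr1 addrC subrK.
Qed.

Lemma decomp_commute_pq b : Ccom A c b -> b = b * p -> b = p * b ->
  GRing.comm (b + j * b * j) p /\ GRing.comm (b + j * b * j) q.
Proof.
move=> [Ab cb] bp pb; have [jj jp] := exchange_j.
have [uc us vc vs] := comm_uv_cs.
have cp : GRing.comm c p := comm_c Ap (comm_sqr_e_p pp qq).
have sp : GRing.comm s p := comm_s Ap (comm_sqr_e_p pp qq).
have sb : GRing.comm s b.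
  by apply: comm_s Ab _; rewrite -sqr_c; apply/commr_sym/commrM; apply: commr_sym.
have cj : GRing.comm c j by apply: comm_j; apply: commr_sym.
have sj : GRing.comm s j by apply: comm_j; apply: commr_sym.
have p_b' := comm_p_exchange_sum jj jp (esym pb) (esym bp).
have j_b' := comm_exchange_sum jj b.
have comm_b' x : GRing.comm x b -> GRing.comm x j -> GRing.comm x (b + j * b * j).
  by move=> xb xj; apply: commrD => //; apply: commrM => //; apply: commrM.
set b' := b + j * b * j in p_b' j_b' comm_b' *.
have b'c := commr_sym (comm_b' c cb cj).
have b's := commr_sym (comm_b' s sb sj).
have b'p := commr_sym p_b'.
split; rewrite // q_decomp.
exact: commrD (commrD (commrM (commrM b'c b'c) b'p) (commrM (commrM b'c b's)
  (commr_sym j_b'))) (commrM (commrM b's b's) (commrB (commr1 b') b'p)).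
Qed.

End GenericPosition.

Theorem theorem8p4 (K : realType) (E : algType K) (A pos : E -> Prop)
  (HA : synaptic A pos) (p q : E) (Hp : proj A p) (Hq : proj A q)
  (g1 : proj_meet A pos p q 0) (g2 : proj_meet A pos p (1 - q) 0)
  (g3 : proj_meet A pos (1 - p) q 0) (g4 : proj_meet A pos (1 - p) (1 - q) 0)
  (c u v : E)
  (Hc : is_sqrt pos (p * q * p + (1 - p) * (1 - q) * (1 - p)) c)
  (Hu : is_polar_symmetry A pos (p - (1 - q)) u)
  (Hv : is_polar_symmetry A pos (p - q) v) :
  let j := u * v * p + p * v * u in
  forall a : E, A a ->
    ((a * p = p * a /\ a * q = q * a) <->
     exists b : E, Ccom A c b /\ b = b * p /\ b = p * b /\ a = b + j * b * j).
Proof.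
move=> j a Aa.
have [s [ps [_ ss]]] := sa5 HA (sa2 HA (A_d HA Hp Hq)).
have Hs : is_sqrt pos ((p - q) * (p - q)) s by [].
split=> [[ap aq] | [b [cb [bp [pb ->]]]]].
- exact: (commute_pq_decomp HA Hp Hq g1 g2 g3 g4 Hc Hs Hu Hv Aa ap aq).
- exact: (decomp_commute_pq HA Hp Hq g1 g2 g3 g4 Hc Hs Hu Hv cb bp pb).
Qed.
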